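(* Let $G$ and $H$ be finite simple connected graphs of order at least $3$, and let $D$ be a minimal dominating set of $G$. The set $D \times V(H)$ is a minimal dominating set of the direct product $G \times H$ if and only if $D$ is an independent set in $G$.
   Context: A set $D$ of vertices is dominating if every vertex is in $D$ or adjacent to a vertex of $D$; it is minimal if no proper subset is dominating. The direct product $G\times H$ has vertex set $V(G)\times V(H)$, with $(g_1,h_1)$ adjacent to $(g_2,h_2)$ iff $g_1g_2\in E(G)$ and $h_1h_2\in E(H)$. *)

From mathcomp Require Import all_boot.
Set Implicit Arguments. Unset Strict Implicit. Unset Printing Implicit Defensive.

Definition simple_graph (T : finType) (e : rel T) : Prop :=
  symmetric e /\ irreflexive e.

Definition connected_graph (T : finType) (e : rel T) : Prop :=
  forall x y : T, connect e x y.

Definition dominating (T : finType) (e : rel T) (D : {set T}) : Prop :=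
  forall v : T, v \in D \/ exists2 u, u \in D & e v u.

Definition minimal_dominating (T : finType) (e : rel T) (D : {set T}) : Prop :=
  dominating e D /\ forall D' : {set T}, D' \proper D -> ~ dominating e D'.

Definition independent (T : finType) (e : rel T) (D : {set T}) : Prop :=
  forall u v, u \in D -> v \in D -> ~~ e u v.

Definition direct_prod (T1 T2 : finType) (e1 : rel T1) (e2 : rel T2)
  : rel (T1 * T2) :=
  fun x y => e1 x.1 y.1 && e2 x.2 y.2.

From mathcomp Require Import all_boot.

Set Implicit Arguments.
Unset Strict Implicit.
Unset Printing Implicit Defensive.

(* If [D] is independent then so is [D x V(H)], and an independent dominating
   set is minimal.  Conversely, pick a vertex [h] of [H] that is nobody's only
   neighbour (it exists as [H] is connected with at least three vertices).  If
   [u v] in [D] are adjacent, [D x V(H)] minus [(u, h)] still dominates: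
   [(u, h)] is dominated via [v], any other vertex [(g, k)] via a neighbour
   [w] of [g] in [D] paired with a neighbour of [k] other than [h]. *)

Section ConnectedGraph.

Variables (T : finType) (e : rel T).
Hypotheses (e_sym : symmetric e) (e_conn : connected_graph e).

Lemma connected_closed_setT (A : {set T}) x :
  (forall u w, e u w -> u \in A -> w \in A) -> x \in A -> A = [set: T].
Proof.
move=> A_cl Ax; apply/setP => y; rewrite inE.
have clA : closed e (mem A) := intro_closed (sym_connect_sym e_sym) A_cl.
by rewrite -(closed_connect clA (e_conn x y)).
Qed.

Lemma connected_no_isolated : 1 < #|T| -> forall x, exists y, e x y.
Proof.
move=> T_gt1 x; apply/existsP; apply: contraT; rewrite negb_exists.
move=> /forallP x_isolated.
have x_cl u w : e u w -> u \in [set x] -> w \in [set x].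
  by rewrite inE => euw /eqP ux; move: (x_isolated w); rewrite -ux euw.
by move: T_gt1; rewrite -cardsT -(connected_closed_setT x_cl (set11 x)) cards1.
Qed.

Lemma exists_nonsupport_vertex :
  2 < #|T| -> exists h, forall x, exists2 y, e x y & y != h.
Proof.
move=> T_gt2.
have [z _] : exists z, z \in T by apply/card_gt0P; apply: leq_trans T_gt2.
have no_isolated := connected_no_isolated (ltnW T_gt2).
(* Either [z] is nobody's only neighbour, or it is the only neighbour of some
   [l]; then [l] is nobody's only neighbour, since only [z] could have [l] as
   such, and then [{z, l}] would be closed under adjacency. *)
case: (pickP [pred l | [forall y, e l y ==> (y == z)]]) => [l /= /forallP l_only_z | z_nobody_only].
  exists l => x; apply/exists_inP; apply: contraT; rewrite negb_exists_in.
  move=> /forall_inP x_only_l.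
  have {}x_only_l w : e x w -> w = l by move=> exw; exact/eqP/negbNE/x_only_l.
  have [w exw] := no_isolated x.
  have xz : x = z.
    by apply/eqP/(implyP (l_only_z x)); rewrite e_sym -(x_only_l w exw).
  subst x.
  have zl_cl u v : e u v -> u \in [set z; l] -> v \in [set z; l].
    move=> euv; rewrite !inE => /orP[] /eqP uE; subst u.
      by rewrite (x_only_l v euv) eqxx orbT.
    by rewrite (eqP (implyP (l_only_z v) euv)) eqxx.
  move: T_gt2; rewrite -cardsT -(connected_closed_setT zl_cl (set21 z l)).
  by rewrite cards2; case: (z != l).
exists z => x; have /forallPn [y] := z_nobody_only x.
by rewrite negb_imply => /andP[]; exists y.
Qed.

End ConnectedGraph.

Lemma independent_dominating_minimal (T : finType) (e : rel T) (S : {set T}) :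
  independent e S -> dominating e S -> minimal_dominating e S.
Proof.
move=> S_ind S_dom; split=> // S' /properP[S'S [x xS xS']] S'_dom.
have [|[u uS' exu]] := S'_dom x; first by rewrite (negbTE xS').
by move: (S_ind x u xS (subsetP S'S u uS')); rewrite exu.
Qed.

Section DirectProduct.

Variables (T1 T2 : finType) (eG : rel T1) (eH : rel T2).
Local Notation eGH := (direct_prod eG eH).

Lemma independent_setX (D : {set T1}) (B : {set T2}) :
  independent eG D -> independent eGH (setX D B).
Proof.
move=> D_ind [g k] [g' k']; rewrite !in_setX => /andP[gD _] /andP[g'D _].
by rewrite /direct_prod /= (negbTE (D_ind g g' gD g'D)).
Qed.

Lemma dominating_setX (D : {set T1}) :
  (forall y, exists y', eH y y') -> dominating eG D ->
  dominating eGH (setX D [set: T2]).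
Proof.
move=> eH_total D_dom [g k]; rewrite in_setX in_setT andbT.
have [gD | [w wD egw]] := D_dom g; [by left | right].
have [k' ekk'] := eH_total k.
by exists (w, k'); rewrite ?in_setX ?in_setT ?wD // /direct_prod /= egw ekk'.
Qed.

Lemma dominating_setXD1 (D : {set T1}) u v h :
  (forall y, exists2 y', eH y y' & y' != h) -> dominating eG D ->
  u \in D -> v \in D -> eG u v ->
  dominating eGH (setX D [set: T2] :\ (u, h)).
Proof.
move=> h_nonsupport D_dom uD vD euv [g k].
have [gk_in | gk_out] := boolP ((g, k) \in setX D [set: T2] :\ (u, h)); [by left | right].
have [w wD egw] : exists2 w, w \in D & eG g w.
  have [gD | [w wD egw]] := D_dom g; last by exists w.
  suff [-> _] : (g, k) = (u, h) by exists v.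
  by apply/eqP; move: gk_out; rewrite !inE gD !andbT negbK.
have [k' ekk' k'h] := h_nonsupport k.
exists (w, k'); last by rewrite /direct_prod /= egw ekk'.
by rewrite !inE wD !andbT xpair_eqE negb_and k'h orbT.
Qed.

Lemma minimal_dominating_setX_independent (D : {set T1}) h :
  (forall y, exists2 y', eH y y' & y' != h) -> dominating eG D ->
  minimal_dominating eGH (setX D [set: T2]) -> independent eG D.
Proof.
move=> h_nonsupport D_dom [_ DX_min] u v uD vD; apply/negP => euv.
have uhX : (u, h) \in setX D [set: T2] by rewrite in_setX uD in_setT.
exact: DX_min (properD1 uhX) (dominating_setXD1 h_nonsupport D_dom uD vD euv).
Qed.

End DirectProduct.

Theorem lemma11 (T1 T2 : finType) (eG : rel T1) (eH : rel T2) (D : {set T1}) :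
  simple_graph eG -> connected_graph eG -> 3 <= #|T1| ->
  simple_graph eH -> connected_graph eH -> 3 <= #|T2| ->
  minimal_dominating eG D ->
  (minimal_dominating (direct_prod eG eH) (setX D [set: T2]) <-> independent eG D).
Proof.
move=> _ _ _ [eH_sym _] eH_conn T2_gt2 [D_dom _].
have [h h_nonsupport] := exists_nonsupport_vertex eH_sym eH_conn T2_gt2.
split; first exact: minimal_dominating_setX_independent h_nonsupport D_dom.
move=> D_ind; apply: independent_dominating_minimal; first exact: independent_setX.
exact: dominating_setX (connected_no_isolated eH_sym eH_conn (ltnW T2_gt2)) D_dom.
Qed.
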